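(* Let $F:\mathbb{R}\to\mathbb{R}$ and $G:\mathbb{R}\to(0,\infty)$ be measurable functions and fix a timestep $\Delta t>0$. Define the Euler–Maruyama transition density $$P(\xi\mid x)=\frac{1}{G(x)\sqrt{2\pi\Delta t}}\exp\!\left(\frac{-[\xi-x-F(x)\Delta t]^2}{2G(x)^2\Delta t}\right),\qquad \xi,x\in\mathbb{R},$$ i.e. the density of $\xi=x+F(x)\Delta t+G(x)\eta\sqrt{\Delta t}$ with $\eta\sim N(0,1)$. Suppose $\rho^*$ is a probability density on $\mathbb{R}$ which is an equilibrium of this step, i.e. $$\rho^*(\xi)=\int_{-\infty}^{\infty}P(\xi\mid x)\,\rho^*(x)\,dx\quad\text{for all }\xi\in\mathbb{R},$$ and suppose its second raw moment $\mu_2=\int_{-\infty}^{\infty}x^2\rho^*(x)\,dx$ is finite. Then $$0=\Delta t\int_{-\infty}^{\infty}\rho^*(x)\left[2xF(x)+G(x)^2\right]dx+\Delta t^2\int_{-\infty}^{\infty}\rho^*(x)\,F(x)^2\,dx .$$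
   Context: This is the Euler–Maruyama discretization with timestep $\Delta t$ of the autonomous Itô SDE $dx=F(x)\,dt+G(x)\,dW$; the equilibrium $\rho^*$ is a density left unchanged by one step of this discretization. *)

From HB Require Import structures.
From mathcomp Require Import all_boot all_order all_algebra.
From mathcomp Require Import all_classical all_reals all_analysis.
Set Implicit Arguments. Unset Strict Implicit. Unset Printing Implicit Defensive.
Import Order.TTheory GRing.Theory Num.Theory.
Local Open Scope ring_scope.

Definition EM_density (R : realType) (F G : R -> R) (dt : R) (xi x : R) : R :=
  (G x * Num.sqrt (2 * pi * dt))^-1 *
  expR (- (xi - x - F x * dt) ^+ 2 / (2 * G x ^+ 2 * dt)).

From HB Require Import structures.
From mathcomp Require Import all_boot all_order all_algebra.
From mathcomp Require Import all_classical all_reals all_analysis.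
From mathcomp Require Import measurable_realfun.
From mathcomp Require Import ring lra.
Import Order.TTheory GRing.Theory Num.Theory.
Import numFieldNormedType.Exports.
Local Open Scope ring_scope.
Local Open Scope classical_set_scope.

(** One Euler--Maruyama step started from [x] is Gaussian with mean
    [x + F x * dt] and variance [G x ^+ 2 * dt], so its second moment is
    [(x + F x * dt) ^+ 2 + G x ^+ 2 * dt].  Multiplying the equilibrium
    equation by [xi ^+ 2] and integrating (Tonelli) therefore gives
    [mu2 = mu2 + dt * E[2 x F + G ^+ 2] + dt ^+ 2 * E[F ^+ 2]]; as [mu2] is
    finite, all the integrals involved are finite and it can be cancelled.
    The Gaussian second moment is computed from
    [x ^+ 2 * pdf x = (m ^+ 2 + s ^+ 2) * pdf x + H' x] with
    [H x = - s ^+ 2 * (x + m) * pdf x], integrating over growing intervals. *)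

Lemma mulr_expR_sqr_le {R : realType} (K b : R) : 0 < K -> 0 < b ->
  b * expR (- b ^+ 2 / K) <= K / b.
Proof.
move=> K_gt0 b_gt0; set y := b ^+ 2 / K.
have y_le : y <= expR y by apply: le_trans (expR_ge1Dx y); rewrite lerDr.
have b2E : b ^+ 2 = K * y by rewrite /y mulrC divfK ?gt_eqF.
rewrite mulNr expRN ler_pdivlMr // mulrAC ler_pdivrMr ?expR_gt0 // -expr2.
by rewrite -/y b2E ler_pM2l.
Qed.

Section normal_second_moment.
Context {R : realType} (m s : R).
Hypothesis s_gt0 : 0 < s.
Local Notation mu := (@lebesgue_measure R).
Local Notation pdf := (normal_pdf m s).

Let s_neq0 : s != 0. Proof. by rewrite gt_eqF. Qed.

Lemma is_derive_normal_fun (x : R) :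
  is_derive x (1:R) (normal_fun m s) (- (x - m) / s ^+ 2 * normal_fun m s x).
Proof.
rewrite /normal_fun.
have -> : (fun x => expR (- (x - m) ^+ 2 / (s ^+ 2 *+ 2))) =
  expR \o (fun x => - (x - m) ^+ 2 / (s ^+ 2 *+ 2)) by [].
apply: is_derive_eq.
rewrite !scaler0 !subr0 add0r /GRing.scale /=.
by field.
Qed.

Lemma is_derive_normal_pdf (x : R) :
  is_derive x (1:R) pdf (- (x - m) / s ^+ 2 * pdf x).
Proof.
rewrite normal_pdfE // mulrCA.
exact: is_deriveZ (is_derive_normal_fun x).
Qed.

Let c := m ^+ 2 + s ^+ 2.
Let H x := - s ^+ 2 * ((x + m) * pdf x).

Let is_derive_H x : is_derive x (1:R) H (x ^+ 2 * pdf x - c * pdf x).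
Proof.
have dpdf := is_derive_normal_pdf x.
rewrite /H; apply: is_derive_eq.
rewrite /c /GRing.scale /=.
by field.
Qed.

Let continuous_H : continuous H.
Proof.
move=> x; apply: differentiable_continuous; apply/derivable1_diffP.
by case: (is_derive_H x).
Qed.

Let integral_itv_sqr_pdf a b : a < b ->
  (\int[mu]_(x in `[a, b]) (x ^+ 2 * pdf x)%:E =
   c%:E * \int[mu]_(x in `[a, b]) (pdf x)%:E + (H b - H a)%:E)%E.
Proof.
move=> ab.
have continuous_pdf : continuous pdf by exact: continuous_normal_pdf.
have cH' : continuous (fun x : R => x ^+ 2 * pdf x - c * pdf x).
  move=> x; apply: cvgB; apply: cvgM; last 3 first.
  - exact: continuous_pdf.
  - exact: cvg_cst.
  - exact: continuous_pdf.
  apply: (cvg_comp (fun z => z) (fun z => z ^+ 2)); first exact: cvg_id.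
  exact: exprn_continuous.
have integrable_itv f : continuous f -> mu.-integrable `[a, b] (EFin \o f).
  move=> cf; apply: continuous_compact_integrable; first exact: segment_compact.
  exact: continuous_subspaceT.
transitivity (\int[mu]_(x in `[a, b]) ((x ^+ 2 * pdf x - c * pdf x)%:E + c%:E * (pdf x)%:E))%E.
  by apply: eq_integral => x _; rewrite -EFinM -EFinD subrK.
rewrite integralD //=; last 2 first.
- exact: integrable_itv.
- exact/integrableZl/integrable_itv.
rewrite integralZl //; last exact: integrable_itv.
rewrite (@continuous_FTC2 _ _ H a b ab); first by rewrite addeC EFinB.
- exact: continuous_subspaceT.
- split; first by move=> x _; case: (is_derive_H x).
  + exact: cvg_at_right_filter (continuous_H a).
  + exact: cvg_at_left_filter (continuous_H b).
- by move=> x _; rewrite derive1E; case: (is_derive_H x).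
Qed.

Let K := s ^+ 2 *+ 2.

Let H_centered_diff b :
  H (m + b) - H (m - b) = - (K * normal_peak s) * (b * expR (- b ^+ 2 / K)).
Proof.
rewrite /H normal_pdfE // /normal_fun -/K.
have -> : m + b - m = b by ring.
have -> : m - b - m = - b by ring.
by rewrite sqrrN /K; ring.
Qed.

Let cvg_H_centered_diff :
  (H (m + n.+1%:R) - H (m - n.+1%:R)) @[n --> \oo] --> (0:R).
Proof.
have K_gt0 : 0 < K by rewrite pmulrn_lgt0 // exprn_gt0.
under eq_fun do rewrite H_centered_diff.
rewrite -(mulr0 (- (K * normal_peak s))); apply: cvgMl_tmp.
apply: (@squeeze_cvgr _ _ _ _ (fun=> 0) (fun n => K * harmonic n)).
- apply: nearW => n; rewrite mulr_ge0 ?expR_ge0 //=.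
  exact: mulr_expR_sqr_le.
- exact: cvg_cst.
- by rewrite -(mulr0 K); apply: cvgMl_tmp; exact: cvg_harmonic.
Qed.

Let I n : set R := `[m - n.+1%:R, m + n.+1%:R].

Let nondecreasing_I : {homo I : n1 n2 / (n1 <= n2)%N >-> (n1 <= n2)%O}.
Proof.
move=> n1 n2 le12; rewrite subsetEset => x; rewrite /I /= !in_itv /= => /andP[].
have : n1.+1%:R <= n2.+1%:R :> R by rewrite ler_nat ltnS.
by move=> ? ? ?; apply/andP; split; lra.
Qed.

Let bigcup_I : \bigcup_n I n = setT.
Proof.
apply/seteqP; split => // x _.
have := archi_boundP (normr_ge0 (x - m)); set n := Num.Def.archi_bound _.
rewrite ltr_norml => /andP[lo hi]; exists n => //; rewrite /I /= in_itv /=.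
have : n%:R <= n.+1%:R :> R by rewrite ler_nat.
by move=> ?; apply/andP; split; lra.
Qed.

Let cvg_integral_I {f : R -> R} : measurable_fun setT f -> (forall x, 0 <= f x) ->
  (\int[mu]_(x in I n) (f x)%:E)%E @[n --> \oo] --> (\int[mu]_x (f x)%:E)%E.
Proof.
move=> mf f_ge0; rewrite -bigcup_I.
apply: ge0_nondecreasing_set_cvg_integral => //.
- by move=> n; exact: measurable_itv.
- by move=> n; apply: measurable_funTS; exact/measurable_EFinP.
- by move=> n x _; rewrite lee_fin.
Qed.

Lemma integral_sqr_normal_pdf :
  (\int[mu]_x (x ^+ 2 * pdf x)%:E = (m ^+ 2 + s ^+ 2)%:E)%E.
Proof.
have pdf_ge0 x : 0 <= pdf x by exact: normal_pdf_ge0.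
have mpdf : measurable_fun setT pdf by exact: measurable_normal_pdf.
have msqr_pdf : measurable_fun setT (fun x : R => x ^+ 2 * pdf x).
  by apply: measurable_funM => //; exact: measurable_funX.
have sqr_pdf_ge0 x : 0 <= x ^+ 2 * pdf x by rewrite mulr_ge0 ?sqr_ge0.
have lim_pdf := cvg_integral_I mpdf pdf_ge0.
rewrite integral_normal_pdf in lim_pdf.
have lim_sqr_pdf : (\int[mu]_(x in I n) (x ^+ 2 * pdf x)%:E)%E @[n --> \oo]
    --> (c%:E * 1 + 0%:E)%E.
  have I_proper n : m - n.+1%:R < m + n.+1%:R.
    by rewrite ltrBlDr -addrA ltrDl addr_gt0 ?ltr0Sn.
  under eq_fun => n do rewrite /I (integral_itv_sqr_pdf _ _ (I_proper n)).
  apply: cvgeD => //; first exact: cvgeZl.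
  by apply: cvg_EFin; [exact: nearW | exact: cvg_H_centered_diff].
rewrite mule1 adde0 in lim_sqr_pdf.
exact: cvg_unique _ (cvg_integral_I msqr_pdf sqr_pdf_ge0) lim_sqr_pdf.
Qed.
End normal_second_moment.

Lemma ge0_integrable d (T : measurableType d) (R : realType)
    (mu : {measure set T -> \bar R}) (D : set T) (f : T -> \bar R) :
  measurable_fun D f -> (forall x, D x -> (0 <= f x)%E) ->
  (\int[mu]_(x in D) f x < +oo)%E -> mu.-integrable D f.
Proof.
move=> mf f_ge0 f_lty; apply/integrableP; split => //.
apply: le_lt_trans f_lty; rewrite le_eqVlt; apply/orP; left; apply/eqP.
by apply: eq_integral => x /[!inE] Dx; rewrite gee0_abs ?f_ge0.
Qed.

Lemma measurable_funV d (T : measurableType d) (R : realType) (f : T -> R) :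
  measurable_fun setT f -> (forall x, 0 < f x) ->
  measurable_fun setT (fun x => (f x)^-1).
Proof.
move=> mf f_gt0; have -> : (fun x => (f x)^-1) = (fun x => f x `^ (-1)).
  by apply/funext => x; rewrite powRN powRr1 // ltW.
exact: measurableT_comp (measurable_powR _) mf.
Qed.

Section EM_density.
Context {R : realType} (F G : R -> R) (dt : R).
Hypotheses (G_gt0 : forall x, 0 < G x) (dt_gt0 : 0 < dt).

Lemma EM_densityE (xi x : R) :
  EM_density F G dt xi x = normal_pdf (x + F x * dt) (G x * Num.sqrt dt) xi.
Proof.
have sd_gt0 : 0 < G x * Num.sqrt dt by rewrite mulr_gt0 ?sqrtr_gt0.
have sd2 : (G x * Num.sqrt dt) ^+ 2 = G x ^+ 2 * dt by rewrite exprMn sqr_sqrtr ?ltW.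
rewrite normal_pdfE ?gt_eqF // /EM_density /normal_peak /normal_fun sd2.
congr (_^-1 * expR _).
  have -> : G x ^+ 2 * dt * pi *+ 2 = G x ^+ 2 * (2 * pi * dt) by rewrite -mulr_natr; ring.
  by rewrite [RHS]sqrtrM ?sqr_ge0 // sqrtr_sqr ger0_norm // ltW.
by rewrite -mulr_natr; congr (- _ ^+ 2 / _); ring.
Qed.

Lemma integral_sqr_EM_density x :
  (\int[lebesgue_measure]_xi (xi ^+ 2 * EM_density F G dt xi x)%:E =
   ((x + F x * dt) ^+ 2 + G x ^+ 2 * dt)%:E)%E.
Proof.
under eq_integral do rewrite EM_densityE.
by rewrite integral_sqr_normal_pdf ?mulr_gt0 ?sqrtr_gt0 // exprMn sqr_sqrtr // ltW.
Qed.

Hypotheses (mF : measurable_fun setT F) (mG : measurable_fun setT G).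

Lemma measurable_EM_density d (T : measurableType d) (u v : T -> R) :
  measurable_fun setT u -> measurable_fun setT v ->
  measurable_fun setT (fun z => EM_density F G dt (u z) (v z)).
Proof.
move=> mU mV.
have mGv : measurable_fun setT (G \o v) by exact: measurableT_comp.
have mFv : measurable_fun setT (F \o v) by exact: measurableT_comp.
apply: measurable_funM.
  apply: measurable_funV; first exact: measurable_funM.
  by move=> z; rewrite mulr_gt0 // sqrtr_gt0 !mulr_gt0 // pi_gt0.
apply: measurableT_comp => //; apply: measurable_funM.
  apply: measurableT_comp => //; apply: measurable_funX.
  by apply: measurable_funB; [exact: measurable_funB | exact: measurable_funM].
apply: measurable_funV; first by do 2 apply: measurable_funM => //; exact: measurable_funX.
by move=> z; rewrite !mulr_gt0 // exprn_gt0.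
Qed.

End EM_density.

Section EM_equilibrium.
Context {R : realType} (F G : R -> R) (dt : R) (rho : R -> R).
Hypotheses (mF : measurable_fun setT F) (mG : measurable_fun setT G).
Hypotheses (G_gt0 : forall x, 0 < G x) (dt_gt0 : 0 < dt).
Hypotheses (mrho : measurable_fun setT rho) (rho_ge0 : forall x, 0 <= rho x).
Hypothesis rho_equilibrium : forall xi : R,
  ((rho xi)%:E = \int[lebesgue_measure]_x (EM_density F G dt xi x * rho x)%:E)%E.
Hypothesis rho_moment2_lty : (\int[lebesgue_measure]_x (x ^+ 2 * rho x)%:E < +oo)%E.
Local Notation mu := (@lebesgue_measure R).
Local Notation P := (EM_density F G dt).

Let P_ge0 xi x : 0 <= P xi x.
Proof. by rewrite EM_densityE // normal_pdf_ge0. Qed.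

Let moment2 x := x ^+ 2 * rho x.
Let moment2_step x := rho x * ((x + F x * dt) ^+ 2 + G x ^+ 2 * dt).

Lemma EM_second_moment_balance :
  (\int[mu]_x (moment2 x)%:E = \int[mu]_x (moment2_step x)%:E)%E.
Proof.
have mP_rho : measurable_fun setT (fun z : R * R => (z.1 ^+ 2 * (P z.1 z.2 * rho z.2))%:E).
  apply/measurable_EFinP; apply: measurable_funM.
    by apply: measurable_funX; exact: measurable_fst.
  apply: measurable_funM; first exact: measurable_EM_density.
  exact: measurableT_comp mrho measurable_snd.
have P_rho_ge0 (z : R * R) : (0 <= (z.1 ^+ 2 * (P z.1 z.2 * rho z.2))%:E)%E.
  by rewrite lee_fin mulr_ge0 ?sqr_ge0 // mulr_ge0.
transitivity (\int[mu]_xi \int[mu]_x (xi ^+ 2 * (P xi x * rho x))%:E)%E.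
  apply: eq_integral => xi _; rewrite /moment2 EFinM rho_equilibrium -ge0_integralZl //.
  - apply/measurable_EFinP; apply: measurable_funM => //.
    exact: measurable_EM_density.
  - by move=> x _; rewrite lee_fin mulr_ge0.
  - by rewrite lee_fin sqr_ge0.
have := @fubini_tonelli _ _ _ _ R mu mu _ mP_rho P_rho_ge0.
rewrite /= => ->.
apply: eq_integral => x _.
transitivity (\int[mu]_xi ((rho x)%:E * (xi ^+ 2 * P xi x)%:E))%E.
  by apply: eq_integral => xi _; rewrite -EFinM; congr EFin; ring.
rewrite ge0_integralZl //; first by rewrite integral_sqr_EM_density // -EFinM.
- apply/measurable_EFinP; apply: measurable_funM; first exact: measurable_funX.
  exact: measurable_EM_density.
- by move=> xi _; rewrite lee_fin mulr_ge0 ?sqr_ge0.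
- by rewrite lee_fin.
Qed.

Let drift x := rho x * (2 * x * F x + G x ^+ 2).
Let rho_sqrF x := rho x * F x ^+ 2.

Let moment2_stepE x :
  moment2_step x = moment2 x + (dt * drift x + dt ^+ 2 * rho_sqrF x).
Proof. by rewrite /moment2_step /moment2 /drift /rho_sqrF; ring. Qed.

Let moment2_ge0 x : 0 <= moment2 x.
Proof. by rewrite mulr_ge0 ?sqr_ge0. Qed.

Let moment2_step_ge0 x : 0 <= moment2_step x.
Proof. by rewrite mulr_ge0 // addr_ge0 ?sqr_ge0 // mulr_ge0 ?sqr_ge0 // ltW. Qed.

Let measurable_moment2 : measurable_fun setT moment2.
Proof. by apply: measurable_funM => //; exact: measurable_funX. Qed.

Let measurable_rho_sqrF : measurable_fun setT rho_sqrF.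
Proof. by apply: measurable_funM => //; exact: measurable_funX. Qed.

Let integrable_moment2 : mu.-integrable setT (EFin \o moment2).
Proof.
apply: ge0_integrable => //; first exact/measurable_EFinP.
by move=> x _; rewrite lee_fin moment2_ge0.
Qed.

Let integrable_moment2_step : mu.-integrable setT (EFin \o moment2_step).
Proof.
apply: ge0_integrable => /=; last by rewrite -EM_second_moment_balance.
- apply/measurable_EFinP; apply: measurable_funM => //.
  apply: measurable_funD; last by apply: measurable_funM => //; exact: measurable_funX.
  by apply: measurable_funX; apply: measurable_funD => //; exact: measurable_funM.
- by move=> x _; rewrite lee_fin moment2_step_ge0.
Qed.

Let integrable_rho_sqrF : mu.-integrable setT (EFin \o rho_sqrF).
Proof.
have dt2_gt0 : 0 < dt ^+ 2 by rewrite exprn_gt0.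
apply: (le_integrable measurableT _ _
  (integrableZl measurableT (dt ^- 2 * 2)
    (integrableD measurableT integrable_moment2 integrable_moment2_step))).
  exact/measurable_EFinP.
move=> x _ /=; rewrite lee_fin.
have rho_sqrF_ge0 : 0 <= rho_sqrF x by rewrite mulr_ge0 ?sqr_ge0.
have bound_ge0 : 0 <= dt ^- 2 * 2 * (moment2 x + moment2_step x).
  by rewrite mulr_ge0 ?addr_ge0 // mulr_ge0 // invr_ge0 exprn_ge0 // ltW.
rewrite !ger0_norm // -mulrA ler_pdivlMl //.
have -> : 2 * (moment2 x + moment2_step x) = dt ^+ 2 * rho_sqrF x +
    rho x * ((2 * x + F x * dt) ^+ 2 + 2 * (G x ^+ 2 * dt)).
  by rewrite /moment2 /moment2_step /rho_sqrF; ring.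
by rewrite lerDl mulr_ge0 // addr_ge0 ?sqr_ge0 // !mulr_ge0 ?sqr_ge0 // ltW.
Qed.

Let integrable_drift : mu.-integrable setT (EFin \o drift).
Proof.
have := integrableB measurableT
  (integrableZl measurableT dt^-1
    (integrableB measurableT integrable_moment2_step integrable_moment2))
  (integrableZl measurableT dt integrable_rho_sqrF).
apply: (eq_integrable measurableT) => x _ /=.
rewrite -EFinD moment2_stepE addrAC subrr add0r mulrDr expr2 -mulrA.
by rewrite !mulKf ?gt_eqF // addrK.
Qed.

Lemma EM_equilibrium_moment_identity :
  (0 = dt%:E * \int[mu]_x (rho x * (2 * x * F x + G x ^+ 2))%:E
       + (dt ^+ 2)%:E * \int[mu]_x (rho x * F x ^+ 2)%:E)%E.
Proof.
apply/esym; rewrite -!integralZl // -integralD //; last 2 first.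
- exact: integrableZl integrable_drift.
- exact: integrableZl integrable_rho_sqrF.
transitivity (\int[mu]_x ((moment2_step x)%:E - (moment2 x)%:E))%E.
  apply: eq_integral => x _.
  by rewrite -!EFinM -EFinD -EFinB moment2_stepE addrAC subrr add0r.
rewrite integralB_EFin // EM_second_moment_balance subee //.
exact: integrable_fin_num integrable_moment2_step.
Qed.

End EM_equilibrium.

Theorem mainTheorem1 (R : realType) (F G : R -> R) (dt : R) (rho : R -> R) :
  measurable_fun [set: R] F ->
  measurable_fun [set: R] G ->
  (forall x, 0 < G x) ->
  0 < dt ->
  measurable_fun [set: R] rho ->
  (forall x, 0 <= rho x) ->
  (\int[@lebesgue_measure R]_(x in [set: R]) (rho x)%:E = 1)%E ->
  (forall xi : R,
     (rho xi)%:E = \int[@lebesgue_measure R]_(x in [set: R]) (EM_density F G dt xi x * rho x)%:E)%E ->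
  (\int[@lebesgue_measure R]_(x in [set: R]) (x ^+ 2 * rho x)%:E < +oo)%E ->
  (0 = dt%:E * \int[@lebesgue_measure R]_(x in [set: R]) (rho x * (2 * x * F x + G x ^+ 2))%:E
       + (dt ^+ 2)%:E * \int[@lebesgue_measure R]_(x in [set: R]) (rho x * F x ^+ 2)%:E)%E.
Proof.
move=> mF mG G_gt0 dt_gt0 mrho rho_ge0 _ rho_equilibrium rho_moment2_lty.
exact: EM_equilibrium_moment_identity.
Qed.
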